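(* There is an absolute constant $C>0$ such that for all integers $2\le k\le n$ there exist speeds $v_1,\dots,v_n\in\mathbb{Z}$ taking exactly $k$ distinct values, and starting positions $s_1,\dots,s_n\in[0,1)$, such that for every $t\in\mathbb{R}$, $$B(s_1+v_1t,\dots,s_n+v_nt)\le C\sqrt{k\log k}.$$
   Context: For $r\in\mathbb{R}$, $\{r\}:=r-\lfloor r\rfloor$. The bias is $B(r_1,\dots,r_n):=\sup_{0\le a\le b\le1}\big|\,|\{i:\{r_i\}\in[a,b]\}|-n(b-a)\big|$. $\log$ is base 2. *)

From Stdlib Require Import Reals Lra Lia ZArith List.
Open Scope R_scope.

(* floor via Stdlib's Int_part (Int_part r = up r - 1 = floor r) *)
Definition frac (r : R) : R := r - IZR (Int_part r).

Definition log2 (x : R) : R := ln x / ln 2.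

Definition in_intervalb (a b x : R) : bool :=
  if Rle_dec a x then (if Rle_dec x b then true else false) else false.

Definition count_in (n : nat) (r : nat -> R) (a b : R) : nat :=
  length (filter (fun i => in_intervalb a b (frac (r i))) (seq 0 n)).

(* B(r_1..r_n) <= X  :  the supremum over 0<=a<=b<=1 is <= X, i.e. every
   quantity under the sup is <= X. *)
Definition bias_le (n : nat) (r : nat -> R) (X : R) : Prop :=
  forall a b : R, 0 <= a -> a <= b -> b <= 1 ->
    Rabs (INR (count_in n r a b) - INR n * (b - a)) <= X.

Definition takes_exactly (n k : nat) (v : nat -> Z) : Prop :=
  exists w : list Z, NoDup w /\ length w = k /\
    (forall i, (i < n)%nat -> In (v i) w) /\
    (forall z, In z w -> exists i, (i < n)%nat /\ v i = z).

From Stdlib Require Import Reals ZArith List.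
From Stdlib Require Import Lra Lia Classical Bool.
Open Scope R_scope.

(* Split the n particles into k speed classes of q or q + 1 particles (q = n / k), class i
   having speed i + 1, and put the m particles of a class at the equally spaced points
   (sg + j) / m, j < m.  Such a class stays equally spaced forever, so it meets [a, b] in
   m (b - a) points up to an error in [-1, 1] that only depends on its phase
   ph = {sg + v m t}: the error is [ph <= {m b}] - {m b} minus the same term with < at m a.
   For a group of K classes of equal size the bias is thus at most twice the discrepancy
   sup_g |#{i | ph_i <= g} - K g| of the K phases.

   The phases move with integer speeds at most k, so between consecutive times of the grid
   j / k^2 each of them moves by less than 1/k, and it suffices to control, at these k^2
   times, the numbers of phases in the (k + 1)^2 unions of consecutive cells
   [A / k, B / k).  With sg = l / k for independent uniform l in {0, ..., k - 1}, at a grid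
   time the cells of the phases are independent and uniform, so by the Chernoff bound each
   of these counts deviates from its mean by more than 4 sqrt (k ln k) with probability at
   most 2 k^-8, and a union bound gives a good choice of the shifts. *)

Lemma Int_part_spec (x : R) : IZR (Int_part x) <= x < IZR (Int_part x) + 1.
Proof. destruct (base_Int_part x). lra. Qed.

Lemma Int_part_unique (x : R) (z : Z) :
  IZR z <= x < IZR z + 1 -> Int_part x = z.
Proof.
  intros [H1 H2]. unfold Int_part.
  assert (up x = (z + 1)%Z) by (symmetry; apply tech_up; rewrite plus_IZR; lra).
  lia.
Qed.

Lemma Int_part_nonneg x : 0 <= x -> (0 <= Int_part x)%Z.
Proof.
  intros Hx. destruct (Int_part_spec x) as [_ H].
  apply le_IZR, Rnot_lt_le. intros Hneg.
  assert (IZR (Int_part x) <= -1) by (apply IZR_le; apply lt_IZR in Hneg; lia). lra.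
Qed.

Lemma frac_bounds x : 0 <= frac x < 1.
Proof. unfold frac. destruct (Int_part_spec x). lra. Qed.

Lemma frac_eq x z : IZR z <= x < IZR z + 1 -> frac x = x - IZR z.
Proof. intros H. unfold frac. rewrite (Int_part_unique x z H). reflexivity. Qed.

Lemma frac_add_IZR x z : frac (x + IZR z) = frac x.
Proof.
  destruct (Int_part_spec x).
  rewrite (frac_eq (x + IZR z) (Int_part x + z)).
  - unfold frac. rewrite plus_IZR. ring.
  - rewrite plus_IZR. lra.
Qed.

Lemma frac_IZR_add z y : 0 <= y < 1 -> frac (IZR z + y) = y.
Proof. intros H. rewrite (frac_eq _ z); [ring | lra]. Qed.

Lemma frac_add_frac x d : frac (x + d) = frac (frac x + d).
Proof.
  replace (frac x + d) with ((x + d) + IZR (- Int_part x)).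
  - now rewrite frac_add_IZR.
  - unfold frac. rewrite opp_IZR. ring.
Qed.

Lemma INR_div_bounds x N : (x < N)%nat -> 0 <= INR x / INR N < 1.
Proof.
  intros H. assert (0 < INR N) by (apply lt_0_INR; lia).
  assert (INR x + 1 <= INR N) by (rewrite <- S_INR; apply le_INR; lia).
  pose proof (pos_INR x). split.
  - apply Rmult_le_pos; [lra | left; apply Rinv_0_lt_compat; lra].
  - apply Rmult_lt_reg_r with (INR N); auto. unfold Rdiv. rewrite Rmult_assoc, Rinv_l; lra.
Qed.

Lemma INR_div_le_1 c N : (0 < N)%nat -> (c <= N)%nat -> 0 <= INR c / INR N <= 1.
Proof.
  intros HN Hc. assert (0 < INR N) by (apply lt_0_INR; auto). split.
  - apply Rmult_le_pos; [apply pos_INR | left; apply Rinv_0_lt_compat; lra].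
  - apply Rmult_le_reg_r with (INR N); auto. unfold Rdiv.
    rewrite Rmult_assoc, Rinv_l, Rmult_1_r, Rmult_1_l by lra. now apply le_INR.
Qed.

Lemma Rabs_le_bounds a b : Rabs a <= b -> - b <= a <= b.
Proof. unfold Rabs. destruct (Rcase_abs a); intros; lra. Qed.

Lemma exp_le_compat x y : x <= y -> exp x <= exp y.
Proof. intros [H|<-]; [left; now apply exp_increasing | lra]. Qed.

Fixpoint rsum (n : nat) (f : nat -> R) : R :=
  match n with O => 0 | S p => rsum p f + f p end.

Lemma rsum_ext n f g : (forall i, (i < n)%nat -> f i = g i) -> rsum n f = rsum n g.
Proof.
  induction n; simpl; intros H; [reflexivity|].
  rewrite IHn, H; auto; lia.
Qed.

Lemma rsum_add n f g : rsum n (fun i => f i + g i) = rsum n f + rsum n g.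
Proof. induction n; simpl; [ring | rewrite IHn; ring]. Qed.

Lemma rsum_sub n f g : rsum n (fun i => f i - g i) = rsum n f - rsum n g.
Proof. induction n; simpl; [ring | rewrite IHn; ring]. Qed.

Lemma rsum_scal n c f : rsum n (fun i => c * f i) = c * rsum n f.
Proof. induction n; simpl; [ring | rewrite IHn; ring]. Qed.

Lemma rsum_const n c : rsum n (fun _ => c) = INR n * c.
Proof. induction n; simpl rsum; [simpl; ring | rewrite IHn, S_INR; ring]. Qed.

Lemma rsum_le n f g : (forall i, (i < n)%nat -> f i <= g i) -> rsum n f <= rsum n g.
Proof.
  induction n; simpl; intros H; [lra|].
  assert (f n <= g n) by (apply H; lia).
  assert (rsum n f <= rsum n g) by (apply IHn; intros; apply H; lia). lra.
Qed.

Lemma rsum_split a b f : rsum (a + b) f = rsum a f + rsum b (fun i => f (a + i)%nat).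
Proof.
  induction b; simpl.
  - rewrite Nat.add_0_r. ring.
  - rewrite Nat.add_succ_r. simpl. rewrite IHb. ring.
Qed.

Lemma rsum_blocks a m f :
  rsum (a * m) f = rsum a (fun i => rsum m (fun j => f (i * m + j)%nat)).
Proof.
  induction a; simpl; [reflexivity|].
  rewrite Nat.add_comm, rsum_split, IHa. ring_simplify. f_equal.
Qed.

Lemma rsum_first n f : rsum (S n) f = f O + rsum n (fun i => f (S i)).
Proof. induction n; simpl in *; [ring | rewrite IHn; ring]. Qed.

Lemma rsum_rotate1 m h : (0 < m)%nat ->
  rsum m (fun j => h ((j + 1) mod m)%nat) = rsum m h.
Proof.
  intros Hm. destruct m as [|m]; [lia|].
  rewrite (rsum_first m h). cbn [rsum].
  rewrite (rsum_ext m (fun j => h ((j + 1) mod S m)%nat) (fun i => h (S i))).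
  - replace ((m + 1) mod S m)%nat with 0%nat; [ring|].
    replace (m + 1)%nat with (1 * S m)%nat by lia. now rewrite Nat.Div0.mod_mul.
  - intros i Hi. f_equal. rewrite Nat.mod_small; lia.
Qed.

Lemma rsum_rotate m p g : (0 < m)%nat ->
  rsum m (fun j => g ((j + p) mod m)%nat) = rsum m g.
Proof.
  intros Hm. induction p.
  - apply rsum_ext. intros i Hi. rewrite Nat.add_0_r, Nat.mod_small; auto.
  - rewrite <- IHp, <- (rsum_rotate1 m (fun x => g ((x + p) mod m)%nat) Hm).
    apply rsum_ext. intros i _. rewrite Nat.Div0.add_mod_idemp_l. do 2 f_equal. lia.
Qed.

Definition b2R (b : bool) : R := if b then 1 else 0.

Lemma b2R_bounds b : 0 <= b2R b <= 1.
Proof. destruct b; simpl; lra. Qed.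

Lemma length_filter_seq (p : nat -> bool) s n :
  INR (length (filter p (seq s n))) = rsum n (fun i => b2R (p (s + i)%nat)).
Proof.
  induction n; [reflexivity|].
  rewrite seq_S, filter_app, length_app, plus_INR, IHn. simpl.
  destruct (p (s + n)%nat); simpl; ring.
Qed.

Lemma rsum_b2R_bounds n (p : nat -> bool) : 0 <= rsum n (fun i => b2R (p i)) <= INR n.
Proof.
  induction n; simpl rsum; [simpl; lra|].
  rewrite S_INR. pose proof (b2R_bounds (p n)). lra.
Qed.

Lemma rsum_b2R_ltb N B : rsum N (fun x => b2R (x <? B)%nat) = INR (Nat.min B N).
Proof.
  induction N; simpl rsum.
  - now rewrite Nat.min_0_r.
  - rewrite IHN. destruct (Nat.ltb_spec N B); simpl b2R.
    + replace (Nat.min B (S N)) with (S (Nat.min B N)) by lia. rewrite S_INR. ring.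
    + replace (Nat.min B (S N)) with (Nat.min B N) by lia. ring.
Qed.

Lemma rsum_b2R_range N A B : (B <= N)%nat ->
  rsum N (fun x => b2R ((A <=? x) && (x <? B))%nat) = INR (B - A).
Proof.
  intros HB. destruct (Nat.le_gt_cases A B) as [HAB|HAB].
  - rewrite (rsum_ext N _ (fun x => b2R (x <? B)%nat - b2R (x <? A)%nat)).
    + rewrite rsum_sub, !rsum_b2R_ltb, minus_INR by lia.
      replace (Nat.min B N) with B by lia. now replace (Nat.min A N) with A by lia.
    + intros x _. destruct (Nat.leb_spec A x), (Nat.ltb_spec x B), (Nat.ltb_spec x A);
        simpl; try lra; lia.
  - replace (B - A)%nat with 0%nat by lia.
    rewrite (rsum_ext N _ (fun _ => 0)), rsum_const; [simpl; ring|].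
    intros x _. destruct (Nat.leb_spec A x), (Nat.ltb_spec x B); simpl; try lra; lia.
Qed.

Definition update (l : nat -> nat) (K x : nat) : nat -> nat :=
  fun i => if Nat.eqb i K then x else l i.

(** The mean of [F l] over the [N^K] points [l] of [{0..N-1}^K]; the coordinates [i >= K]
    of [l] are [0]. *)
Fixpoint cube_mean (N K : nat) (F : (nat -> nat) -> R) : R :=
  match K with
  | O => F (fun _ => O)
  | S K' => cube_mean N K' (fun l => / INR N * rsum N (fun x => F (update l K' x)))
  end.

Lemma cube_mean_ext N K F G : (forall l, F l = G l) -> cube_mean N K F = cube_mean N K G.
Proof.
  revert F G. induction K; intros F G H; simpl; auto.
  apply IHK. intros l. f_equal. apply rsum_ext. intros; apply H.
Qed.

Lemma cube_mean_add N K F G :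
  cube_mean N K (fun l => F l + G l) = cube_mean N K F + cube_mean N K G.
Proof.
  revert F G. induction K; intros F G; simpl; auto.
  rewrite <- IHK. apply cube_mean_ext. intros l. rewrite rsum_add. ring.
Qed.

Lemma cube_mean_scal N K c F : cube_mean N K (fun l => c * F l) = c * cube_mean N K F.
Proof.
  revert F. induction K; intros F; simpl; auto.
  rewrite <- IHK. apply cube_mean_ext. intros l. rewrite rsum_scal. ring.
Qed.

Lemma cube_mean_const N K c : (0 < N)%nat -> cube_mean N K (fun _ => c) = c.
Proof.
  intros HN. induction K; simpl; auto.
  rewrite (cube_mean_ext N K _ (fun _ => c)); auto.
  intros l. rewrite rsum_const. field. apply not_0_INR; lia.
Qed.

Lemma rsum_lt_exists N f c : (0 < N)%nat -> / INR N * rsum N f < c ->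
  exists x, (x < N)%nat /\ f x < c.
Proof.
  intros HN H. apply NNPP. intros Hno.
  assert (Hall : forall x, (x < N)%nat -> c <= f x).
  { intros x Hx. apply Rnot_lt_le. intros Hlt. apply Hno. now exists x. }
  assert (Hle : rsum N (fun _ => c) <= rsum N f) by now apply rsum_le.
  rewrite rsum_const in Hle.
  assert (0 < INR N) by (apply lt_0_INR; auto).
  assert (c <= / INR N * rsum N f).
  { apply (Rmult_le_reg_l (INR N)); auto. rewrite <- Rmult_assoc, Rinv_r; lra. }
  lra.
Qed.

Lemma cube_mean_lt_exists N K F c : (0 < N)%nat -> cube_mean N K F < c ->
  exists l, (forall i, (i < K)%nat -> (l i < N)%nat) /\ F l < c.
Proof.
  intros HN. revert F. induction K; intros F H; simpl in H.
  - exists (fun _ => O). split; [intros; lia | auto].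
  - destruct (IHK _ H) as [l [Hl Hc]].
    destruct (rsum_lt_exists N _ c HN Hc) as [x [Hx Hf]].
    exists (update l K x). split; auto.
    intros i Hi. unfold update. destruct (Nat.eqb_spec i K); auto. apply Hl; lia.
Qed.

Fixpoint rprod (n : nat) (f : nat -> R) : R :=
  match n with O => 1 | S p => rprod p f * f p end.

Lemma rprod_ext n f g : (forall i, (i < n)%nat -> f i = g i) -> rprod n f = rprod n g.
Proof.
  induction n; simpl; intros H; [reflexivity|].
  rewrite IHn, H; auto; lia.
Qed.

Lemma exp_rsum n f : exp (rsum n f) = rprod n (fun i => exp (f i)).
Proof. induction n; simpl; [apply exp_0 | now rewrite exp_plus, IHn]. Qed.

Lemma rprod_exp_bound n f a : (forall i, (i < n)%nat -> 0 <= f i <= exp a) ->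
  0 <= rprod n f <= exp (INR n * a).
Proof.
  induction n; intros H; simpl rprod.
  - simpl. rewrite Rmult_0_l, exp_0. lra.
  - assert (0 <= rprod n f <= exp (INR n * a)) by (apply IHn; intros; apply H; lia).
    assert (0 <= f n <= exp a) by (apply H; lia).
    rewrite S_INR, Rmult_plus_distr_r, Rmult_1_l, exp_plus.
    split; [nra | apply Rmult_le_compat; lra].
Qed.

Lemma cube_mean_rprod N K g :
  cube_mean N K (fun l => rprod K (fun i => g i (l i))) =
  rprod K (fun i => / INR N * rsum N (g i)).
Proof.
  induction K; simpl; auto.
  rewrite <- IHK, Rmult_comm, <- cube_mean_scal. apply cube_mean_ext. intros l.
  rewrite <- rsum_scal, (Rmult_comm _ (rprod _ _)), <- !rsum_scal. apply rsum_ext. intros x _.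
  rewrite (rprod_ext K (fun i => g i (update l K x i)) (fun i => g i (l i))).
  - unfold update. rewrite Nat.eqb_refl. ring.
  - intros i Hi. unfold update. destruct (Nat.eqb_spec i K); [lia | reflexivity].
Qed.

Definition lsum {X : Type} (E : list X) (f : X -> R) : R :=
  fold_right (fun e acc => f e + acc) 0 E.

Lemma lsum_le {X} (E : list X) f g : (forall e, In e E -> f e <= g e) -> lsum E f <= lsum E g.
Proof.
  induction E; simpl; intros H; [lra|].
  assert (f a <= g a) by auto. assert (lsum E f <= lsum E g) by auto. lra.
Qed.

Lemma lsum_const {X} (E : list X) c : lsum E (fun _ => c) = INR (length E) * c.
Proof. induction E; simpl lsum; [simpl; ring|]. rewrite IHE. simpl length. rewrite S_INR. ring. Qed.

Lemma lsum_nonneg {X} (E : list X) f : (forall e, In e E -> 0 <= f e) -> 0 <= lsum E f.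
Proof.
  induction E; simpl; intros H; [lra|].
  assert (0 <= f a) by auto. assert (0 <= lsum E f) by auto. lra.
Qed.

Lemma lsum_ge_term {X} (E : list X) f e :
  (forall e, In e E -> 0 <= f e) -> In e E -> f e <= lsum E f.
Proof.
  induction E as [|a E IH]; simpl; intros Hpos Hin; [contradiction|].
  assert (0 <= lsum E f) by (apply lsum_nonneg; auto).
  destruct Hin as [->|Hin]; [lra|].
  assert (0 <= f a) by auto. assert (f e <= lsum E f) by auto. lra.
Qed.

Lemma cube_mean_lsum {X} N K (E : list X) G : (0 < N)%nat ->
  cube_mean N K (fun l => lsum E (fun e => G e l)) = lsum E (fun e => cube_mean N K (G e)).
Proof.
  intros HN. induction E; simpl.
  - now apply cube_mean_const.
  - now rewrite cube_mean_add, IHE.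
Qed.

Lemma exp_le_quadratic y : y <= 1/2 -> exp y <= 1 + y + 2 * y ^ 2.
Proof.
  intros Hy.
  assert (H1 : 1 + - y <= exp (- y)) by apply exp_ineq1_le.
  assert (H2 : exp y * exp (- y) = 1) by (rewrite <- exp_plus, Rplus_opp_r; apply exp_0).
  assert (0 < exp y) by apply exp_pos.
  assert (exp y * (1 - y) <= 1) by nra.
  assert (1 <= (1 + y + 2 * y ^ 2) * (1 - y)) by nra.
  apply (Rmult_le_reg_r (1 - y)); lra.
Qed.

Lemma bernoulli_mgf_le p lam : 0 <= p <= 1 -> Rabs lam <= 1/2 ->
  p * exp (lam * (1 - p)) + (1 - p) * exp (- (lam * p)) <= exp (lam ^ 2 / 2).
Proof.
  intros Hp Hl. apply Rabs_le_bounds in Hl.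
  assert (A : exp (lam * (1 - p)) <= 1 + lam * (1 - p) + 2 * (lam * (1 - p)) ^ 2).
  { apply exp_le_quadratic. assert (0 <= (1/2 - lam) * (1 - p)) by (apply Rmult_le_pos; lra). nra. }
  assert (B : exp (- (lam * p)) <= 1 + - (lam * p) + 2 * (- (lam * p)) ^ 2).
  { apply exp_le_quadratic. assert (0 <= (1/2 + lam) * p) by (apply Rmult_le_pos; lra). nra. }
  assert (1 + lam ^ 2 / 2 <= exp (lam ^ 2 / 2)) by apply exp_ineq1_le.
  assert (p * exp (lam * (1 - p)) <= p * (1 + lam * (1 - p) + 2 * (lam * (1 - p)) ^ 2))
    by (apply Rmult_le_compat_l; lra).
  assert ((1 - p) * exp (- (lam * p)) <= (1 - p) * (1 + - (lam * p) + 2 * (- (lam * p)) ^ 2))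
    by (apply Rmult_le_compat_l; lra).
  assert (p * (1 + lam * (1 - p) + 2 * (lam * (1 - p)) ^ 2)
          + (1 - p) * (1 + - (lam * p) + 2 * (- (lam * p)) ^ 2)
          = 1 + 2 * lam ^ 2 * (p * (1 - p))) by ring.
  assert (p * (1 - p) <= 1/4) by (pose proof (pow2_ge_0 (p - 1/2)); nra).
  assert (0 <= lam ^ 2 * (1/4 - p * (1 - p))) by (apply Rmult_le_pos; [apply pow2_ge_0 | lra]).
  lra.
Qed.

Lemma mean_exp_centred_indicator N (Q : nat -> bool) c lam : (0 < N)%nat ->
  rsum N (fun x => b2R (Q x)) = INR c ->
  / INR N * rsum N (fun x => exp (lam * (b2R (Q x) - INR c / INR N))) =
  (INR c / INR N) * exp (lam * (1 - INR c / INR N))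
  + (1 - INR c / INR N) * exp (- (lam * (INR c / INR N))).
Proof.
  intros HN Hc. set (p := INR c / INR N).
  rewrite (rsum_ext N _ (fun x => (exp (lam * (1 - p)) - exp (- (lam * p))) * b2R (Q x)
                                   + exp (- (lam * p)))).
  - rewrite rsum_add, rsum_const, rsum_scal, Hc. unfold p. field. apply not_0_INR; lia.
  - intros x _. destruct (Q x); simpl b2R; [ring|].
    replace (lam * (0 - p)) with (- (lam * p)) by ring. ring.
Qed.

(** Chernoff bound for a sum of [K] independent indicators, each uniform over [N]
    values of which [c] are successes. *)
Lemma cube_mean_exp_deviation_le N K (Q : nat -> nat -> bool) c lam :
  (0 < N)%nat -> (c <= N)%nat ->
  (forall i, (i < K)%nat -> rsum N (fun x => b2R (Q i x)) = INR c) -> Rabs lam <= 1/2 ->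
  cube_mean N K (fun l => exp (lam * (rsum K (fun i => b2R (Q i (l i))) - INR K * INR c / INR N)))
  <= exp (INR K * (lam ^ 2 / 2)).
Proof.
  intros HN HcN Hc Hlam. set (p := INR c / INR N).
  assert (Hp : 0 <= p <= 1) by now apply INR_div_le_1.
  rewrite (cube_mean_ext N K _ (fun l => rprod K (fun i => exp (lam * (b2R (Q i (l i)) - p))))).
  - rewrite (cube_mean_rprod N K (fun i x => exp (lam * (b2R (Q i x) - p)))).
    apply rprod_exp_bound. intros i Hi.
    unfold p. rewrite (mean_exp_centred_indicator N (Q i) c lam HN (Hc i Hi)). fold p. split.
    + apply Rplus_le_le_0_compat; apply Rmult_le_pos; try lra; left; apply exp_pos.
    + now apply bernoulli_mgf_le.
  - intros l. rewrite <- exp_rsum. f_equal.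
    rewrite (rsum_ext K (fun i => lam * (b2R (Q i (l i)) - p))
                        (fun i => lam * b2R (Q i (l i)) - lam * p)) by (intros; ring).
    rewrite rsum_sub, rsum_scal, rsum_const. unfold p. field. apply not_0_INR; lia.
Qed.

Lemma exp_lt_1 x : exp x < 1 -> x < 0.
Proof. intros H. destruct (Rlt_or_le x 0); auto. pose proof (exp_ineq1_le x). lra. Qed.

Lemma Rabs_le_of_exp_tails lam u x : 0 < lam ->
  exp (- (lam * u)) * (exp (lam * x) + exp (- lam * x)) < 1 -> Rabs x <= u.
Proof.
  intros Hlam H. rewrite Rmult_plus_distr_l, <- !exp_plus in H.
  pose proof (exp_pos (- (lam * u) + lam * x)). pose proof (exp_pos (- (lam * u) + - lam * x)).
  pose proof (exp_lt_1 (- (lam * u) + lam * x) ltac:(lra)).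
  pose proof (exp_lt_1 (- (lam * u) + - lam * x) ltac:(lra)).
  apply Rabs_le. split; nra.
Qed.

Lemma cube_mean_exp_tails_le N K (Q : nat -> nat -> bool) c lam :
  (0 < N)%nat -> (c <= N)%nat ->
  (forall i, (i < K)%nat -> rsum N (fun x => b2R (Q i x)) = INR c) -> Rabs lam <= 1/2 ->
  cube_mean N K (fun l =>
    let dev := rsum K (fun i => b2R (Q i (l i))) - INR K * INR c / INR N in
    exp (lam * dev) + exp (- lam * dev))
  <= 2 * exp (INR K * (lam ^ 2 / 2)).
Proof.
  intros HN HcN Hc Hlam. cbv zeta. rewrite cube_mean_add.
  pose proof (cube_mean_exp_deviation_le N K Q c lam HN HcN Hc Hlam).
  pose proof (cube_mean_exp_deviation_le N K Q c (- lam) HN HcN Hc) as Hneg.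
  rewrite Rabs_Ropp in Hneg. specialize (Hneg Hlam).
  replace ((- lam) ^ 2) with (lam ^ 2) in Hneg by ring. lra.
Qed.

(** The probabilistic method: if the Chernoff bounds of the events in [E] add up to
    less than 1, some point of [{0..N-1}^K] avoids all of them. *)
Lemma hoeffding_union_bound (N K : nat) (X : Type) (E : list X) (P : X -> nat -> nat -> bool)
  (cnt : X -> nat) (u : R) :
  (0 < N)%nat -> (0 < K)%nat -> 0 < u -> u <= INR K / 2 ->
  (forall e i, In e E -> (i < K)%nat -> rsum N (fun x => b2R (P e i x)) = INR (cnt e)) ->
  2 * INR (length E) * exp (- (u * u) / (2 * INR K)) < 1 ->
  exists l, (forall i, (i < K)%nat -> (l i < N)%nat) /\
    forall e, In e E ->
      Rabs (rsum K (fun i => b2R (P e i (l i))) - INR K * INR (cnt e) / INR N) <= u.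
Proof.
  intros HN HK Hu HuK Hcnt Hunion.
  assert (HKr : 0 < INR K) by (apply lt_0_INR; auto).
  set (lam := u / INR K).
  assert (Hlam : 0 < lam) by (unfold lam; apply Rdiv_lt_0_compat; auto).
  assert (Hlam2 : Rabs lam <= 1/2).
  { rewrite Rabs_right by lra. unfold lam. apply Rmult_le_reg_r with (INR K); auto.
    unfold Rdiv. rewrite Rmult_assoc, Rinv_l by lra. lra. }
  set (dev := fun e l => rsum K (fun i => b2R (P e i (l i))) - INR K * INR (cnt e) / INR N).
  set (tail := fun e l => exp (- (lam * u)) * (exp (lam * dev e l) + exp (- lam * dev e l))).
  assert (HcN : forall e, In e E -> (cnt e <= N)%nat).
  { intros e He. apply INR_le. rewrite <- (Hcnt e 0%nat He HK).
    apply (rsum_b2R_bounds N (P e 0%nat)). }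
  assert (Hmean : cube_mean N K (fun l => lsum E (fun e => tail e l)) < 1).
  { rewrite cube_mean_lsum by auto. eapply Rle_lt_trans; [|exact Hunion].
    eapply Rle_trans.
    - apply lsum_le with (g := fun _ => exp (- (lam * u)) * (2 * exp (INR K * (lam ^ 2 / 2)))).
      intros e He. unfold tail. rewrite cube_mean_scal.
      apply Rmult_le_compat_l; [left; apply exp_pos|].
      exact (cube_mean_exp_tails_le N K (P e) (cnt e) lam HN (HcN e He)
               (fun i Hi => Hcnt e i He Hi) Hlam2).
    - rewrite lsum_const. right.
      replace (exp (- (u * u) / (2 * INR K)))
        with (exp (- (lam * u)) * exp (INR K * (lam ^ 2 / 2))); [ring|].
      rewrite <- exp_plus. f_equal. unfold lam. field. lra. }
  destruct (cube_mean_lt_exists N K _ 1 HN Hmean) as [l [Hl Hbad]].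
  exists l. split; auto. intros e He.
  apply (Rabs_le_of_exp_tails lam); auto. eapply Rle_lt_trans; [|exact Hbad].
  apply (lsum_ge_term E (fun e => tail e l)); auto.
  intros e' _. apply Rmult_le_pos; [left; apply exp_pos|].
  apply Rplus_le_le_0_compat; left; apply exp_pos.
Qed.

Definition cell (N : nat) (y : R) : nat := Z.to_nat (Int_part (INR N * y)).

Lemma INR_Z_to_nat z : (0 <= z)%Z -> INR (Z.to_nat z) = IZR z.
Proof. intros H. rewrite INR_IZR_INZ, Z2Nat.id; auto. Qed.

Lemma cell_bounds N y : (0 < N)%nat -> 0 <= y < 1 ->
  (cell N y < N)%nat /\ INR (cell N y) <= INR N * y < INR (cell N y) + 1.
Proof.
  intros HN Hy. unfold cell.
  assert (0 < INR N) by (apply lt_0_INR; auto).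
  destruct (Int_part_spec (INR N * y)).
  assert (Hz : (0 <= Int_part (INR N * y))%Z) by (apply Int_part_nonneg; nra).
  rewrite INR_Z_to_nat by auto. split; [|lra].
  apply INR_lt. rewrite INR_Z_to_nat by auto. nra.
Qed.

Lemma cell_eq N y c : INR c <= INR N * y < INR c + 1 -> cell N y = c.
Proof.
  intros H. unfold cell. rewrite (Int_part_unique _ (Z.of_nat c)).
  - apply Nat2Z.id.
  - now rewrite <- INR_IZR_INZ.
Qed.

Lemma cell_add_grid N l y : (0 < N)%nat -> (l < N)%nat ->
  cell N (frac (INR l / INR N + y)) = ((l + cell N (frac y)) mod N)%nat.
Proof.
  intros HN Hl.
  assert (HNr : 0 < INR N) by (apply lt_0_INR; auto).
  set (c := cell N (frac y)).
  destruct (cell_bounds N (frac y) HN (frac_bounds y)) as [Hc [Hc1 Hc2]]. fold c in Hc, Hc1, Hc2.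
  set (r := ((l + c) mod N)%nat). set (dq := ((l + c) / N)%nat).
  assert (Hdm : (l + c = N * dq + r)%nat) by (apply Nat.div_mod; lia).
  assert (Hr : (r < N)%nat) by (apply Nat.mod_upper_bound; lia).
  assert (INR r + 1 <= INR N) by (rewrite <- S_INR; apply le_INR; lia).
  rewrite Rplus_comm, frac_add_frac, Rplus_comm.
  set (e := INR N * frac y - INR c).
  assert (Heq : INR l / INR N + frac y = IZR (Z.of_nat dq) + (INR r + e) / INR N).
  { rewrite <- INR_IZR_INZ. unfold e.
    assert (INR l + INR c = INR N * INR dq + INR r)
      by (rewrite <- plus_INR, <- mult_INR, <- plus_INR; f_equal; auto).
    field_simplify_eq; lra. }
  rewrite Heq, frac_IZR_add.
  - apply cell_eq. replace (INR N * ((INR r + e) / INR N)) with (INR r + e) by (field; lra).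
    unfold e. lra.
  - split.
    + apply Rmult_le_pos; [|left; apply Rinv_0_lt_compat; lra].
      pose proof (pos_INR r). unfold e; lra.
    + apply Rmult_lt_reg_r with (INR N); auto. unfold Rdiv. rewrite Rmult_assoc, Rinv_l by lra.
      unfold e. lra.
Qed.

Lemma cell_small_step N x d : (0 < N)%nat -> 0 <= x < 1 -> 0 <= d < / INR N ->
  cell N (frac (x + d)) = cell N x \/ cell N (frac (x + d)) = S (cell N x) \/
  (S (cell N x) = N /\ cell N (frac (x + d)) = 0%nat).
Proof.
  intros HN Hx Hd.
  assert (HNr : 0 < INR N) by (apply lt_0_INR; auto).
  destruct (cell_bounds N x HN Hx) as [Hc [Hc1 Hc2]]. set (c := cell N x) in *.
  assert (HNd : INR N * d < 1).
  { apply Rmult_lt_reg_l with (/ INR N); [apply Rinv_0_lt_compat; lra|].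
    rewrite <- Rmult_assoc, Rinv_l by lra. lra. }
  assert (HcN : INR c + 1 <= INR N) by (rewrite <- S_INR; apply le_INR; lia).
  assert (0 <= INR N * d) by (apply Rmult_le_pos; lra).
  destruct (Rlt_or_le (x + d) 1) as [Hlt|Hge].
  - rewrite (frac_eq (x + d) 0) by (simpl; lra). rewrite Rminus_0_r.
    destruct (Rlt_or_le (INR N * (x + d)) (INR c + 1)).
    + left. apply cell_eq. rewrite Rmult_plus_distr_l in *. lra.
    + right; left. apply cell_eq. rewrite S_INR, Rmult_plus_distr_l in *. lra.
  - assert (1 <= INR N) by (apply (le_INR 1); lia).
    rewrite (frac_eq (x + d) 1) by nra.
    assert (INR N <= INR N * (x + d)) by (rewrite <- (Rmult_1_r (INR N)) at 1; apply Rmult_le_compat_l; lra).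
    assert (Hc' : S c = N).
    { assert (Hq : INR N < INR (S (S c))) by (rewrite !S_INR, Rmult_plus_distr_l in *; lra).
      apply INR_lt in Hq. lia. }
    right; right. split; auto. apply cell_eq. simpl INR.
    assert (INR c + 1 = INR N) by (rewrite <- S_INR, Hc'; reflexivity).
    rewrite Rmult_minus_distr_l, Rmult_plus_distr_l in *. lra.
Qed.

Lemma time_grid_approx N W v tau : (0 < N)%nat -> (0 < W)%nat -> (v <= W)%nat ->
  let T := (N * W)%nat in
  let j := cell T (frac tau) in
  (j < T)%nat /\
  forall s, exists d, 0 <= d < / INR N /\
    frac (s + INR v * tau) = frac (frac (s + INR v * (INR j / INR T)) + d).
Proof.
  intros HN HW Hv T j.
  assert (HT : (0 < T)%nat) by (unfold T; lia).
  assert (HTr : 0 < INR T) by (apply lt_0_INR; auto).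
  assert (HNr : 0 < INR N) by (apply lt_0_INR; auto).
  assert (HWr : 0 < INR W) by (apply lt_0_INR; auto).
  destruct (cell_bounds T (frac tau) HT (frac_bounds tau)) as [Hj [Hj1 Hj2]].
  fold j in Hj, Hj1, Hj2. split; auto. intros s.
  set (f := frac tau). set (tj := INR j / INR T).
  exists (INR v * (f - tj)).
  assert (Hf1 : tj <= f).
  { unfold tj, f. apply Rmult_le_reg_l with (INR T); auto.
    replace (INR T * (INR j / INR T)) with (INR j) by (field; lra). lra. }
  assert (Hf2 : INR T * (f - tj) < 1).
  { unfold tj, f. replace (INR T * (frac tau - INR j / INR T)) with (INR T * frac tau - INR j)
      by (field; lra). lra. }
  assert (HvW : INR v <= INR W) by (apply le_INR; auto).
  assert (HTNW : INR T = INR N * INR W) by (unfold T; apply mult_INR).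
  split.
  - split; [apply Rmult_le_pos; [apply pos_INR | lra]|].
    apply Rle_lt_trans with (INR W * (f - tj)); [apply Rmult_le_compat_r; lra|].
    apply Rmult_lt_reg_l with (INR N); auto. rewrite Rinv_r by lra.
    rewrite HTNW in Hf2. nra.
  - rewrite <- frac_add_frac.
    replace (s + INR v * tau)
      with (s + INR v * tj + INR v * (f - tj) + IZR (Z.of_nat v * Int_part tau)).
    + now rewrite frac_add_IZR.
    + rewrite mult_IZR, <- INR_IZR_INZ. unfold f, frac. ring.
Qed.

Definition phase (N : nat) (l spd : nat -> nat) (tau : R) (i : nat) : R :=
  frac (INR (l i) / INR N + INR (spd i) * tau).

Definition cell_count N K l spd tau A B : R :=
  rsum K (fun i => b2R ((A <=? cell N (phase N l spd tau i))
                        && (cell N (phase N l spd tau i) <? B))%nat).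

Definition grid_balanced N K W l spd U : Prop :=
  forall j A B, (j < N * W)%nat -> (A <= N)%nat -> (B <= N)%nat ->
    Rabs (cell_count N K l spd (INR j / INR (N * W)) A B - INR K * INR (B - A) / INR N) <= U.

Lemma grid_balanced_trivial N K W l spd U : (0 < N)%nat -> INR K <= U ->
  grid_balanced N K W l spd U.
Proof.
  intros HN HKU j A B _ HA HB. assert (0 < INR N) by (apply lt_0_INR; auto).
  pose proof (rsum_b2R_bounds K (fun i => ((A <=? cell N (phase N l spd (INR j / INR (N * W)) i))
                      && (cell N (phase N l spd (INR j / INR (N * W)) i) <? B))%nat)).
  pose proof (INR_div_le_1 (B - A) N HN ltac:(lia)). pose proof (pos_INR K).
  replace (INR K * INR (B - A) / INR N) with (INR K * (INR (B - A) / INR N)) by (field; lra).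
  unfold cell_count. apply Rabs_le. nra.
Qed.

(** At a grid time the cell of particle [i] is [(l i + c) mod N] for a [c] independent of
    [l], so for uniformly random [l] each count is a sum of independent indicators;
    there are [N W (N+1)^2] events. *)
Lemma exists_grid_balanced_shifts N K W (spd : nat -> nat) u :
  (0 < N)%nat -> (0 < W)%nat -> (K <= N)%nat -> 0 < u ->
  2 * INR ((N * W) * (S N * S N)) * exp (- (u * u) / (2 * INR N)) < 1 ->
  exists l, (forall i, (i < K)%nat -> (l i < N)%nat) /\ grid_balanced N K W l spd (2 * u).
Proof.
  intros HN HW HKN Hu Hunion.
  assert (HNr : 0 < INR N) by (apply lt_0_INR; auto).
  destruct (Rle_or_lt (2 * u) (INR K)) as [HuK|HuK].
  2:{ exists (fun _ => O). split; [intros; lia | apply grid_balanced_trivial; auto; lra]. }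
  assert (HK : (0 < K)%nat) by (apply INR_lt; simpl; lra).
  set (T := (N * W)%nat).
  set (c := fun i j => cell N (frac (INR (spd i) * (INR j / INR T)))).
  set (E := list_prod (seq 0 T) (list_prod (seq 0 (S N)) (seq 0 (S N)))).
  set (P := fun (e : nat * (nat * nat)) i x => let '(j, (A, B)) := e in
              ((A <=? (x + c i j) mod N) && ((x + c i j) mod N <? B))%nat).
  set (cnt := fun (e : nat * (nat * nat)) => let '(j, (A, B)) := e in (B - A)%nat).
  destruct (hoeffding_union_bound N K _ E P cnt u HN HK Hu ltac:(lra)) as [l [Hl Hgood]].
  - intros [j [A B]] i He Hi. apply in_prod_iff in He as [Hj HAB].
    apply in_prod_iff in HAB as [HA HB]. apply in_seq in HB. simpl.
    rewrite (rsum_rotate N (c i j) (fun y => b2R ((A <=? y) && (y <? B))%nat) HN).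
    apply rsum_b2R_range. lia.
  - unfold E. rewrite !length_prod, !length_seq.
    assert (0 < INR K) by (apply lt_0_INR; auto).
    assert (INR K <= INR N) by (apply le_INR; auto).
    eapply Rle_lt_trans; [|exact Hunion].
    apply Rmult_le_compat_l; [apply Rmult_le_pos; [lra | apply pos_INR]|].
    apply exp_le_compat. unfold Rdiv. rewrite !Ropp_mult_distr_l.
    apply Rmult_le_compat_neg_l.
    + pose proof (Rle_0_sqr u). unfold Rsqr in *. lra.
    + apply Rinv_le_contravar; lra.
  - exists l. split; auto. intros j A B Hj HA HB.
    assert (He : In (j, (A, B)) E).
    { apply in_prod_iff. split; [apply in_seq; lia|].
      apply in_prod_iff. split; apply in_seq; lia. }
    specialize (Hgood _ He). simpl in Hgood.
    replace (cell_count N K l spd (INR j / INR (N * W)) A B)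
      with (rsum K (fun i => b2R ((A <=? (l i + c i j) mod N) && ((l i + c i j) mod N <? B))%nat)).
    + lra.
    + unfold cell_count. apply rsum_ext. intros i Hi. unfold phase. rewrite cell_add_grid; auto.
Qed.

Definition Rleb (x y : R) : bool := if Rle_dec x y then true else false.
Definition Rltb (x y : R) : bool := if Rlt_dec x y then true else false.

(** Common interface of [Rleb] and [Rltb], so that the closed right end and the open left
    end of an interval are handled at once. *)
Definition order_test (cmp : R -> R -> bool) : Prop :=
  (forall a b, a < b -> cmp a b = true) /\ (forall a b, b < a -> cmp a b = false) /\
  (forall z a b, cmp (z + a) (z + b) = cmp a b).

Lemma Rleb_order_test : order_test Rleb.
Proof.
  unfold Rleb. split; [|split]; intros.
  - destruct Rle_dec; [reflexivity | lra].
  - destruct Rle_dec; [lra | reflexivity].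
  - destruct (Rle_dec (z + a) (z + b)), (Rle_dec a b); auto; lra.
Qed.

Lemma Rltb_order_test : order_test Rltb.
Proof.
  unfold Rltb. split; [|split]; intros.
  - destruct Rlt_dec; [reflexivity | lra].
  - destruct Rlt_dec; [lra | reflexivity].
  - destruct (Rlt_dec (z + a) (z + b)), (Rlt_dec a b); auto; lra.
Qed.

(** Closed form of [#{h < m | cmp (h + ph) y} - y] for [0 <= ph < 1] and [0 <= y <= m],
    see [rsum_b2R_grid_test]. *)
Definition count_defect (cmp : R -> R -> bool) (m : nat) (ph y : R) : R :=
  if Rlt_dec y (INR m) then b2R (cmp ph (frac y)) - frac y else 0.

Lemma nat_floor y : 0 <= y -> exists Y : nat, y = INR Y + frac y.
Proof.
  intros Hy. exists (Z.to_nat (Int_part y)).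
  rewrite INR_Z_to_nat by (now apply Int_part_nonneg). unfold frac. ring.
Qed.

Section OrderTest.

Variable cmp : R -> R -> bool.
Hypothesis Hcmp : order_test cmp.

Lemma rsum_b2R_grid_test_below m ph Y f : 0 <= ph < 1 -> 0 <= f < 1 -> (Y < m)%nat ->
  rsum m (fun h => b2R (cmp (INR h + ph) (INR Y + f))) = INR Y + b2R (cmp ph f).
Proof.
  destruct Hcmp as [Hlt [Hgt Hshift]]. intros Hph Hf HY.
  set (b := cmp ph f).
  rewrite (rsum_ext m _ (fun h => b2R (h <? Y + (if b then 1 else 0))%nat)).
  - rewrite rsum_b2R_ltb, Nat.min_l by (destruct b; lia).
    rewrite plus_INR. now destruct b.
  - intros h _. f_equal. destruct (Nat.lt_trichotomy h Y) as [Hh|[->|Hh]].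
    + assert (INR h + 1 <= INR Y) by (rewrite <- S_INR; apply le_INR; lia).
      rewrite Hlt by lra. symmetry. apply Nat.ltb_lt. lia.
    + rewrite Hshift. unfold b. destruct (cmp ph f); symmetry; apply Nat.ltb_nlt || apply Nat.ltb_lt; lia.
    + assert (INR Y + 1 <= INR h) by (rewrite <- S_INR; apply le_INR; lia).
      rewrite Hgt by lra. symmetry. apply Nat.ltb_nlt. destruct b; lia.
Qed.

Lemma rsum_b2R_grid_test m ph y : (0 < m)%nat -> 0 <= ph < 1 -> 0 <= y <= INR m ->
  rsum m (fun h => b2R (cmp (INR h + ph) y)) - y = count_defect cmp m ph y.
Proof.
  intros Hm Hph Hy. unfold count_defect. destruct (Rlt_dec y (INR m)) as [Hym|Hym].
  - destruct (nat_floor y (proj1 Hy)) as [Y HY].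
    pose proof (frac_bounds y).
    assert (HYm : (Y < m)%nat) by (apply INR_lt; lra).
    rewrite (rsum_ext m _ (fun h => b2R (cmp (INR h + ph) (INR Y + frac y))))
      by (intros; now rewrite <- HY).
    rewrite rsum_b2R_grid_test_below; auto. lra.
  - replace y with (INR m) by lra.
    rewrite (rsum_ext m _ (fun _ => 1)), rsum_const; [ring|].
    intros h Hh. destruct Hcmp as [Hlt _]. rewrite Hlt; [reflexivity|].
    assert (INR h + 1 <= INR m) by (rewrite <- S_INR; apply le_INR; lia). lra.
Qed.

End OrderTest.

Lemma frac_equispaced m sg v t : (0 < m)%nat ->
  exists P : nat, forall j : nat,
    frac ((sg + INR j) / INR m + INR v * t) =
    (INR ((j + P) mod m) + frac (sg + INR v * (INR m * t))) / INR m.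
Proof.
  intros Hm. assert (Hmr : 0 < INR m) by (apply lt_0_INR; auto).
  set (X := sg + INR v * (INR m * t)). set (I := Int_part X).
  assert (Hmz : (Z.of_nat m <> 0)%Z) by lia.
  pose proof (Z.div_mod I (Z.of_nat m) Hmz) as Hdm.
  pose proof (Z.mod_pos_bound I (Z.of_nat m) ltac:(lia)) as Hb.
  set (qz := (I / Z.of_nat m)%Z) in *. set (pz := (I mod Z.of_nat m)%Z) in *.
  exists (Z.to_nat pz). intros j. set (P := Z.to_nat pz).
  assert (HIP : IZR I = INR m * IZR qz + INR P).
  { unfold P. rewrite INR_Z_to_nat by lia. rewrite Hdm at 1.
    rewrite plus_IZR, mult_IZR, <- INR_IZR_INZ. ring. }
  set (r := ((j + P) mod m)%nat). set (dq := ((j + P) / m)%nat).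
  assert (Hjp : (j + P = m * dq + r)%nat) by (apply Nat.div_mod; lia).
  assert (Hr : (r < m)%nat) by (apply Nat.mod_upper_bound; lia).
  assert (INR r + 1 <= INR m) by (rewrite <- S_INR; apply le_INR; lia).
  assert (HjpR : INR j + INR P = INR m * INR dq + INR r)
    by (rewrite <- plus_INR, <- mult_INR, <- plus_INR; f_equal; auto).
  pose proof (frac_bounds X).
  assert (HX : X = IZR I + frac X) by (unfold frac, I; ring).
  replace ((sg + INR j) / INR m + INR v * t) with
    (IZR (Z.of_nat dq + qz) + (INR r + frac X) / INR m).
  - apply frac_IZR_add. split.
    + apply Rmult_le_pos; [pose proof (pos_INR r); lra | left; apply Rinv_0_lt_compat; lra].
    + apply Rmult_lt_reg_r with (INR m); auto. unfold Rdiv. rewrite Rmult_assoc, Rinv_l by lra. lra.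
  - rewrite plus_IZR, <- INR_IZR_INZ.
    replace (sg + INR j) with (INR j + X - INR v * (INR m * t)) by (unfold X; ring).
    set (fX := frac X) in *. rewrite HX, HIP. field_simplify_eq; [|lra]. nra.
Qed.

Lemma equispaced_count_deviation m sg v t a b : (0 < m)%nat -> 0 <= a -> a <= b -> b <= 1 ->
  rsum m (fun j => b2R (in_intervalb a b (frac ((sg + INR j) / INR m + INR v * t))))
    - INR m * (b - a)
  = count_defect Rleb m (frac (sg + INR v * (INR m * t))) (INR m * b)
    - count_defect Rltb m (frac (sg + INR v * (INR m * t))) (INR m * a).
Proof.
  intros Hm Ha Hab Hb. assert (Hmr : 0 < INR m) by (apply lt_0_INR; auto).
  set (ph := frac (sg + INR v * (INR m * t))).
  pose proof (frac_bounds (sg + INR v * (INR m * t))) as Hph. fold ph in Hph.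
  destruct (frac_equispaced m sg v t Hm) as [P HP]. fold ph in HP.
  set (g := fun h => b2R (Rleb (INR h + ph) (INR m * b)) - b2R (Rltb (INR h + ph) (INR m * a))).
  rewrite (rsum_ext m _ (fun j => g ((j + P) mod m)%nat)).
  - rewrite (rsum_rotate m P g Hm). unfold g. rewrite rsum_sub.
    rewrite <- (rsum_b2R_grid_test Rleb Rleb_order_test m ph (INR m * b)),
            <- (rsum_b2R_grid_test Rltb Rltb_order_test m ph (INR m * a)); auto; try lra;
      split; try nra; rewrite <- (Rmult_1_r (INR m)) at 2; apply Rmult_le_compat_l; lra.
  - intros j Hj. rewrite HP. unfold g. set (z := INR ((j + P) mod m) + ph).
    assert ((z / INR m) * INR m = z) by (field; lra).
    unfold in_intervalb, Rleb, Rltb.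
    destruct (Rle_dec a (z / INR m)), (Rle_dec (z / INR m) b),
      (Rle_dec z (INR m * b)), (Rlt_dec z (INR m * a)); simpl; try lra; nra.
Qed.

Lemma prefix_indicator_step N G r rj : (rj < N)%nat ->
  r = rj \/ r = S rj \/ (S rj = N /\ r = 0%nat) ->
  b2R ((0 <=? r) && (r <? G))%nat
    <= b2R ((0 <=? rj) && (rj <? G))%nat + b2R ((N - 1 <=? rj) && (rj <? N))%nat /\
  b2R ((0 <=? rj) && (rj <? G - 1))%nat <= b2R ((0 <=? r) && (r <? G))%nat.
Proof.
  intros Hrj [->|[->|[Hw ->]]];
    repeat match goal with
    | |- context [Nat.ltb ?a ?b] => destruct (Nat.ltb_spec a b)
    | |- context [Nat.leb ?a ?b] => destruct (Nat.leb_spec a b)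
    end; simpl; lra || lia.
Qed.

Section BalancedPhases.

Variables (N K W : nat) (l spd : nat -> nat) (U : R).
Hypotheses (HN : (0 < N)%nat) (HW : (0 < W)%nat) (HKN : (K <= N)%nat) (HU : 0 <= U).
Hypothesis Hspd : forall i, (i < K)%nat -> (spd i <= W)%nat.
Hypothesis Hbal : grid_balanced N K W l spd U.

(** Between two grid times every phase moves by less than one cell, so the count of an
    initial segment of cells is squeezed between grid counts of segments one cell
    shorter and one cell longer. *)
Lemma cell_count_prefix_bounds tau G : (G <= N)%nat ->
  cell_count N K l spd tau 0 G <= INR K * INR G / INR N + INR K / INR N + 2 * U /\
  INR K * (INR G - 1) / INR N - U <= cell_count N K l spd tau 0 G.
Proof.
  intros HG. assert (HNr : 0 < INR N) by (apply lt_0_INR; auto).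
  set (T := (N * W)%nat). set (j := cell T (frac tau)).
  assert (Hj : (j < T)%nat) by (destruct (time_grid_approx N W 0 tau HN HW ltac:(lia)); auto).
  set (tj := INR j / INR T).
  assert (Hstep : forall i, (i < K)%nat ->
    let r := cell N (phase N l spd tau i) in let rj := cell N (phase N l spd tj i) in
    (rj < N)%nat /\ (r = rj \/ r = S rj \/ (S rj = N /\ r = 0%nat))).
  { intros i Hi r rj.
    destruct (time_grid_approx N W (spd i) tau HN HW (Hspd i Hi)) as [_ Hd].
    destruct (Hd (INR (l i) / INR N)) as [d [Hd1 Hd2]]. split.
    - apply cell_bounds; auto. apply frac_bounds.
    - unfold r, rj, phase. fold T j tj in Hd2. rewrite Hd2.
      apply cell_small_step; auto. apply frac_bounds. }
  pose proof (Hbal j 0%nat G Hj ltac:(lia) HG) as Hfull.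
  pose proof (Hbal j (N - 1)%nat N Hj ltac:(lia) ltac:(lia)) as Hlast.
  pose proof (Hbal j 0%nat (G - 1)%nat Hj ltac:(lia) ltac:(lia)) as Hshort.
  fold T tj in Hfull, Hlast, Hshort.
  replace (N - (N - 1))%nat with 1%nat in Hlast by lia. rewrite Nat.sub_0_r in Hfull, Hshort.
  apply Rabs_le_bounds in Hfull, Hlast, Hshort.
  replace (INR K * INR 1 / INR N) with (INR K / INR N) in Hlast by (simpl; field; lra).
  assert (INR G - 1 <= INR (G - 1)).
  { destruct G as [|G']; [simpl; lra|]. replace (S G' - 1)%nat with G' by lia. rewrite S_INR. lra. }
  assert (INR K * (INR G - 1) / INR N <= INR K * INR (G - 1) / INR N).
  { unfold Rdiv. apply Rmult_le_compat_r; [left; apply Rinv_0_lt_compat; lra|].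
    apply Rmult_le_compat_l; [apply pos_INR | lra]. }
  split.
  - assert (cell_count N K l spd tau 0 G
            <= cell_count N K l spd tj 0 G + cell_count N K l spd tj (N - 1) N).
    { unfold cell_count. rewrite <- rsum_add. apply rsum_le. intros i Hi.
      destruct (Hstep i Hi) as [Hlt Hc]. exact (proj1 (prefix_indicator_step N G _ _ Hlt Hc)). }
    lra.
  - assert (cell_count N K l spd tj 0 (G - 1) <= cell_count N K l spd tau 0 G).
    { apply rsum_le. intros i Hi.
      destruct (Hstep i Hi) as [Hlt Hc]. exact (proj2 (prefix_indicator_step N G _ _ Hlt Hc)). }
    lra.
Qed.

Lemma phase_discrepancy cmp tau gam : order_test cmp -> 0 <= gam < 1 ->
  Rabs (rsum K (fun i => b2R (cmp (phase N l spd tau i) gam)) - INR K * gam) <= 2 * U + 2.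
Proof.
  intros [Hlt [Hgt _]] Hgam. assert (HNr : 0 < INR N) by (apply lt_0_INR; auto).
  destruct (cell_bounds N gam HN Hgam) as [Hgl [Hg1 Hg2]]. set (g := cell N gam) in *.
  destruct (cell_count_prefix_bounds tau g ltac:(lia)) as [_ Hlo].
  destruct (cell_count_prefix_bounds tau (S g) ltac:(lia)) as [Hhi _].
  set (hits := rsum K (fun i => b2R (cmp (phase N l spd tau i) gam))).
  assert (Hbelow : cell_count N K l spd tau 0 g <= hits).
  { apply rsum_le. intros i _.
    destruct (cell_bounds N (phase N l spd tau i) HN (frac_bounds _)) as [_ [Hc1 Hc2]].
    destruct (Nat.ltb_spec (cell N (phase N l spd tau i)) g); simpl;
      [|pose proof (b2R_bounds (cmp (phase N l spd tau i) gam)); lra].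
    rewrite Hlt; simpl; [lra|].
    assert (INR (S (cell N (phase N l spd tau i))) <= INR g) by (apply le_INR; lia).
    rewrite S_INR in *. apply Rmult_lt_reg_l with (INR N); lra. }
  assert (Habove : hits <= cell_count N K l spd tau 0 (S g)).
  { apply rsum_le. intros i _.
    destruct (cell_bounds N (phase N l spd tau i) HN (frac_bounds _)) as [_ [Hc1 Hc2]].
    destruct (Rlt_or_le gam (phase N l spd tau i)) as [Hbig|Hsmall].
    - rewrite Hgt by lra. apply b2R_bounds.
    - destruct (Nat.ltb_spec (cell N (phase N l spd tau i)) (S g)); simpl;
        [pose proof (b2R_bounds (cmp (phase N l spd tau i) gam)); lra|].
      assert (INR N * phase N l spd tau i <= INR N * gam) by (apply Rmult_le_compat_l; lra).
      assert (Hq : INR (cell N (phase N l spd tau i)) < INR (S g)) by (rewrite S_INR; lra).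
      apply INR_lt in Hq. lia. }
  set (a := INR K / INR N).
  assert (0 <= a <= 1) by now apply INR_div_le_1.
  replace (INR K * INR (S g) / INR N) with (a * (INR g + 1)) in Hhi by (unfold a; rewrite S_INR; field; lra).
  replace (INR K * (INR g - 1) / INR N) with (a * (INR g - 1)) in Hlo by (unfold a; field; lra).
  replace (INR K * gam) with (a * (INR N * gam)) by (unfold a; field; lra).
  fold a in Hhi.
  assert (a * INR g <= a * (INR N * gam)) by (apply Rmult_le_compat_l; lra).
  assert (a * (INR N * gam) <= a * (INR g + 1)) by (apply Rmult_le_compat_l; lra).
  apply Rabs_le. split; nra.
Qed.

Lemma rsum_count_defect_le cmp m tau y : order_test cmp ->
  Rabs (rsum K (fun i => count_defect cmp m (phase N l spd tau i) y)) <= 2 * U + 2.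
Proof.
  intros Hcmp. unfold count_defect. destruct (Rlt_dec y (INR m)).
  - rewrite rsum_sub, rsum_const. now apply phase_discrepancy, frac_bounds.
  - rewrite rsum_const, Rmult_0_r, Rabs_R0. lra.
Qed.

Lemma speed_classes_deviation_le m t a b : (0 < m)%nat -> 0 <= a -> a <= b -> b <= 1 ->
  Rabs (rsum K (fun i => rsum m (fun j =>
          b2R (in_intervalb a b (frac ((INR (l i) / INR N + INR j) / INR m + INR (spd i) * t)))))
        - INR K * (INR m * (b - a))) <= 4 * U + 4.
Proof.
  intros Hm Ha Hab Hb.
  rewrite <- rsum_const, <- rsum_sub.
  rewrite (rsum_ext K _ (fun i => count_defect Rleb m (phase N l spd (INR m * t) i) (INR m * b)
                              - count_defect Rltb m (phase N l spd (INR m * t) i) (INR m * a)))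
    by (intros; apply equispaced_count_deviation; auto).
  rewrite rsum_sub.
  pose proof (rsum_count_defect_le Rleb m (INR m * t) (INR m * b) Rleb_order_test) as Hle.
  pose proof (rsum_count_defect_le Rltb m (INR m * t) (INR m * a) Rltb_order_test) as Hlt.
  apply Rabs_le_bounds in Hle, Hlt. apply Rabs_le. lra.
Qed.

End BalancedPhases.

Lemma ln_INR_pos k : (2 <= k)%nat -> 0 < ln (INR k).
Proof.
  intros Hk. rewrite <- ln_1. apply ln_increasing; [lra|].
  assert (INR 2 <= INR k) by (apply le_INR; auto). simpl in *. lra.
Qed.

(** With [u = 4 sqrt (k ln k)] the Chernoff bound [exp (-u^2 / 2k)] is [k^-8]. *)
Lemma union_bound_lt_1 k : (2 <= k)%nat ->
  2 * INR (k * k * (S k * S k)) *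
    exp (- (4 * sqrt (INR k * ln (INR k)) * (4 * sqrt (INR k * ln (INR k)))) / (2 * INR k)) < 1.
Proof.
  intros Hk. pose proof (ln_INR_pos k Hk).
  assert (2 <= INR k) by (apply (le_INR 2); auto).
  replace (- (4 * sqrt (INR k * ln (INR k)) * (4 * sqrt (INR k * ln (INR k)))) / (2 * INR k))
    with (- (INR 8 * ln (INR k))).
  2:{ replace (4 * sqrt (INR k * ln (INR k)) * (4 * sqrt (INR k * ln (INR k))))
        with (16 * (sqrt (INR k * ln (INR k)) * sqrt (INR k * ln (INR k)))) by ring.
      rewrite sqrt_sqrt by nra. simpl INR. field. lra. }
  rewrite <- ln_pow, exp_Ropp, exp_ln, <- pow_INR by (try apply pow_lt; lra).
  assert (Hn : (2 * (k * k * (S k * S k)) < k ^ 8)%nat).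
  { assert (16 <= k * k * k * k)%nat by nia.
    assert (S k * S k <= 4 * (k * k))%nat by nia.
    replace (k ^ 8)%nat with ((k * k * k * k) * (k * k * k * k))%nat by (simpl; ring).
    nia. }
  apply lt_INR in Hn. rewrite mult_INR in Hn. simpl (INR 2) in Hn.
  pose proof (pos_INR (k * k * (S k * S k))).
  apply Rmult_lt_reg_r with (INR (k ^ 8)); [lra|].
  rewrite Rmult_assoc, Rinv_l by lra. lra.
Qed.

Lemma sqrt_k_ln_le_log2 k : (2 <= k)%nat ->
  16 * (4 * sqrt (INR k * ln (INR k))) + 8 <= 72 * sqrt (INR k * log2 (INR k)).
Proof.
  intros Hk. pose proof (ln_INR_pos k Hk).
  assert (Hkr : 2 <= INR k) by (apply (le_INR 2); auto).
  assert (0 < ln 2) by (rewrite <- ln_1; apply ln_increasing; lra).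
  assert (ln 2 < 1).
  { rewrite <- (ln_exp 1). apply ln_increasing; [lra|].
    pose proof (exp_ineq1 1 ltac:(lra)). lra. }
  assert (Hlog : ln (INR k) <= log2 (INR k) /\ 1 <= log2 (INR k)).
  { unfold log2. assert (ln 2 <= ln (INR k)).
    { destruct (Rle_lt_or_eq_dec 2 (INR k) Hkr) as [Hlt|<-]; [left; apply ln_increasing|]; lra. }
    split; apply Rmult_le_reg_r with (ln 2); auto; unfold Rdiv;
      rewrite Rmult_assoc, Rinv_l by lra; nra. }
  assert (sqrt (INR k * ln (INR k)) <= sqrt (INR k * log2 (INR k)))
    by (apply sqrt_le_1_alt, Rmult_le_compat_l; lra).
  assert (1 <= sqrt (INR k * log2 (INR k))) by (rewrite <- sqrt_1; apply sqrt_le_1_alt; nra).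
  lra.
Qed.

(** Writing [n = rr (q + 1) + (k - rr) q] with [rr < k], particle [r] belongs to one of [k]
    speed classes: the first [rr] classes have [q + 1] particles and shifts [l1], the
    others [q] particles and shifts [l2]; particle [j] of a class of size [m] and shift [s]
    starts at [(s / k + j) / m], and class [i] has speed [i + 1]. *)
Definition split_speed (rr q r : nat) : nat :=
  if (r <? rr * S q)%nat then S (r / S q) else S (rr + (r - rr * S q) / q).

Definition split_start (k rr q : nat) (l1 l2 : nat -> nat) (r : nat) : R :=
  if (r <? rr * S q)%nat then (INR (l1 (r / S q)%nat) / INR k + INR (r mod S q)%nat) / INR (S q)
  else (INR (l2 ((r - rr * S q) / q)%nat) / INR k + INR ((r - rr * S q) mod q)%nat) / INR q.

Lemma div_mod_block i m j : (j < m)%nat -> ((i * m + j) / m = i)%nat /\ ((i * m + j) mod m = j)%nat.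
Proof.
  intros Hj. split.
  - symmetry. apply Nat.div_unique with j; lia.
  - symmetry. apply Nat.mod_unique with i; lia.
Qed.

Section SplitConfiguration.

Variables (n k rr q : nat).
Hypotheses (Hq : (1 <= q)%nat) (Hrr : (rr < k)%nat) (Hn : n = (rr * S q + (k - rr) * q)%nat).

Lemma split_speed_takes_exactly : takes_exactly n k (fun r => Z.of_nat (split_speed rr q r)).
Proof.
  exists (map (fun i => Z.of_nat (S i)) (seq 0 k)). split; [|split; [|split]].
  - apply NoDup_map_NoDup_ForallPairs; [intros x y _ _ H; lia | apply seq_NoDup].
  - now rewrite length_map, length_seq.
  - intros r Hr. apply in_map_iff. unfold split_speed.
    destruct (Nat.ltb_spec r (rr * S q)) as [HA|HA].
    + exists (r / S q)%nat. split; auto. apply in_seq.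
      assert (r / S q < rr)%nat by (apply Nat.Div0.div_lt_upper_bound; lia). lia.
    + exists (rr + (r - rr * S q) / q)%nat. split; auto. apply in_seq.
      assert ((r - rr * S q) / q < k - rr)%nat by (apply Nat.Div0.div_lt_upper_bound; lia). lia.
  - intros z Hz. apply in_map_iff in Hz as [x [<- Hx]]. apply in_seq in Hx. unfold split_speed.
    destruct (Nat.lt_ge_cases x rr) as [Hxr|Hxr].
    + exists (x * S q)%nat. split; [nia|].
      destruct (Nat.ltb_spec (x * S q) (rr * S q)); [|nia].
      now rewrite Nat.div_mul by lia.
    + exists (rr * S q + (x - rr) * q)%nat. split; [nia|].
      destruct (Nat.ltb_spec (rr * S q + (x - rr) * q) (rr * S q)); [nia|].
      replace (rr * S q + (x - rr) * q - rr * S q)%nat with ((x - rr) * q)%nat by lia.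
      rewrite Nat.div_mul by lia. f_equal. lia.
Qed.

Lemma equispaced_start_bounds sg j m : 0 <= sg < 1 -> (j < m)%nat -> 0 <= (sg + INR j) / INR m < 1.
Proof.
  intros Hs Hj. assert (0 < INR m) by (apply lt_0_INR; lia).
  assert (INR j + 1 <= INR m) by (rewrite <- S_INR; apply le_INR; lia).
  pose proof (pos_INR j). split.
  - apply Rmult_le_pos; [lra | left; apply Rinv_0_lt_compat; lra].
  - apply Rmult_lt_reg_r with (INR m); auto. unfold Rdiv. rewrite Rmult_assoc, Rinv_l; lra.
Qed.

Lemma split_start_bounds l1 l2 :
  (forall i, (i < rr)%nat -> (l1 i < k)%nat) -> (forall i, (i < k - rr)%nat -> (l2 i < k)%nat) ->
  forall r, (r < n)%nat -> 0 <= split_start k rr q l1 l2 r < 1.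
Proof.
  intros Hl1 Hl2 r Hr. unfold split_start.
  destruct (Nat.ltb_spec r (rr * S q)) as [HA|HA];
    (apply equispaced_start_bounds; [apply INR_div_bounds | apply Nat.mod_upper_bound; lia]).
  - apply Hl1, Nat.Div0.div_lt_upper_bound; lia.
  - apply Hl2, Nat.Div0.div_lt_upper_bound; lia.
Qed.

Lemma rsum_split_classes l1 l2 (g : R -> R) t :
  rsum n (fun r => g (split_start k rr q l1 l2 r + INR (split_speed rr q r) * t)) =
  rsum rr (fun i => rsum (S q) (fun j =>
    g ((INR (l1 i) / INR k + INR j) / INR (S q) + INR (S i) * t)))
  + rsum (k - rr) (fun i => rsum q (fun j =>
    g ((INR (l2 i) / INR k + INR j) / INR q + INR (S (rr + i)) * t))).
Proof.
  rewrite Hn, rsum_split, !rsum_blocks. unfold split_start, split_speed. f_equal.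
  - apply rsum_ext. intros i Hi. apply rsum_ext. intros j Hj.
    destruct (div_mod_block i (S q) j Hj) as [-> ->].
    destruct (Nat.ltb_spec (i * S q + j) (rr * S q)); [reflexivity | nia].
  - apply rsum_ext. intros i Hi. apply rsum_ext. intros j Hj.
    destruct (Nat.ltb_spec (rr * S q + (i * q + j)) (rr * S q)); [lia|].
    replace (rr * S q + (i * q + j) - rr * S q)%nat with (i * q + j)%nat by lia.
    now destruct (div_mod_block i q j Hj) as [-> ->].
Qed.

Lemma split_configuration_bias_le l1 l2 U t : 0 <= U ->
  grid_balanced k rr k l1 S U -> grid_balanced k (k - rr) k l2 (fun i => S (rr + i)) U ->
  bias_le n (fun r => split_start k rr q l1 l2 r + IZR (Z.of_nat (split_speed rr q r)) * t)
    (8 * U + 8).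
Proof.
  intros HU Hbal1 Hbal2 a b Ha Hab Hb.
  unfold count_in. rewrite length_filter_seq. simpl (0 + _)%nat.
  rewrite (rsum_ext n _ (fun r => (fun x => b2R (in_intervalb a b (frac x)))
             (split_start k rr q l1 l2 r + INR (split_speed rr q r) * t)))
    by (intros; now rewrite <- INR_IZR_INZ).
  rewrite (rsum_split_classes l1 l2 (fun x => b2R (in_intervalb a b (frac x))) t).
  pose proof (speed_classes_deviation_le k rr k l1 S U ltac:(lia) ltac:(lia) ltac:(lia) HU
                ltac:(intros; lia) Hbal1 (S q) t a b ltac:(lia) Ha Hab Hb) as Hfirst.
  pose proof (speed_classes_deviation_le k (k - rr) k l2 (fun i => S (rr + i)) U ltac:(lia)
                ltac:(lia) ltac:(lia) HU ltac:(intros; simpl; lia) Hbal2 q t a b ltac:(lia) Ha Hab Hb)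
    as Hsecond.
  replace (INR n) with (INR rr * INR (S q) + INR (k - rr) * INR q)
    by (rewrite Hn, plus_INR, !mult_INR; reflexivity).
  apply Rabs_le_bounds in Hfirst, Hsecond. apply Rabs_le. lra.
Qed.

End SplitConfiguration.

Theorem mainTheorem6 :
  exists C : R, C > 0 /\
    forall n k : nat, (2 <= k)%nat -> (k <= n)%nat ->
      exists (v : nat -> Z) (s : nat -> R),
        takes_exactly n k v /\
        (forall i, (i < n)%nat -> 0 <= s i < 1) /\
        forall t : R,
          bias_le n (fun i => s i + IZR (v i) * t)
                  (C * sqrt (INR k * log2 (INR k))).
Proof.
  exists 72. split; [lra|]. intros n k Hk Hkn.
  set (q := (n / k)%nat). set (rr := (n mod k)%nat).
  assert (Hrr : (rr < k)%nat) by (apply Nat.mod_upper_bound; lia).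
  assert (Hq : (1 <= q)%nat) by (apply Nat.div_le_lower_bound; lia).
  assert (Hn : n = (rr * S q + (k - rr) * q)%nat)
    by (pose proof (Nat.div_mod n k ltac:(lia)); unfold q, rr; nia).
  set (u := 4 * sqrt (INR k * ln (INR k))).
  assert (Hu : 0 < u) by (apply Rmult_lt_0_compat, sqrt_lt_R0, Rmult_lt_0_compat;
                         [lra | apply lt_0_INR | apply ln_INR_pos]; lia).
  destruct (exists_grid_balanced_shifts k rr k S u ltac:(lia) ltac:(lia) ltac:(lia) Hu
              (union_bound_lt_1 k Hk)) as [l1 [Hl1 Hbal1]].
  destruct (exists_grid_balanced_shifts k (k - rr) k (fun i => S (rr + i)) u ltac:(lia) ltac:(lia)
              ltac:(lia) Hu (union_bound_lt_1 k Hk)) as [l2 [Hl2 Hbal2]].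
  exists (fun r => Z.of_nat (split_speed rr q r)), (split_start k rr q l1 l2).
  split; [|split].
  - now apply split_speed_takes_exactly.
  - now apply split_start_bounds.
  - intros t a b Ha Hab Hb.
    pose proof (split_configuration_bias_le n k rr q Hq Hrr Hn l1 l2 (2 * u) t ltac:(lra)
                  Hbal1 Hbal2 a b Ha Hab Hb) as Hbias.
    pose proof (sqrt_k_ln_le_log2 k Hk) as Hconst. fold u in Hconst. lra.
Qed.
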